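(* Let $n \geq 1$ and consider sites $v_1,\ldots,v_n$ with uplink capacities $C_u(v_k)>0$ and downlink capacities $C_d(v_k)>0$, and client data streams $s_1,\ldots,s_n$ with rates $R_1,\ldots,R_n>0$ that are sustainable, i.e. (1) $R_i \leq C_u(v_i)$ for every $i$; (2) $\sum_{j\neq i} R_j \leq C_d(v_i)$ for every $i$; (3) $(n-1)\sum_{i=1}^n R_i \leq \sum_{i=1}^n C_u(v_i)$. Then there exists a partitioning scheme for each client data stream, i.e. nonnegative reals $r_{i,j}$ ($1\le i,j\le n$) with $\sum_{j=1}^n r_{i,j}=R_i$ for every $i$, together with, for every pair $(i,j)$, a broadcast tree $T_{i,j}$ for the sub-stream $s_{i,j}$ (a rooted spanning tree on $\{v_1,\ldots,v_n\}$ with root $v_i$), such that: (a) each sub-stream can be broadcast at its rate without violating downlink and uplink bandwidth constraints at any site, i.e. for every $k$, $$\sum_{i=1}^n\sum_{j=1}^n r_{i,j}\, c_{T_{i,j}}(v_k) \leq C_u(v_k) \quad\text{and}\quad \sum_{i\neq k}\sum_{j=1}^n r_{i,j} \leq C_d(v_k),$$ where $c_T(u)$ denotes the number of children of $u$ in the rooted tree $T$; (b) the height of each tree $T_{i,j}$ is at most $2$.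
   Context: Network model: $n$ sites $v_1,\ldots,v_n$ are pairwise connected through a congestion-free core (complete graph); each site $v$ has an uplink bandwidth $C_u(v)>0$ and a downlink bandwidth $C_d(v)>0$. A unicast transmission at rate $r$ from one site to another consumes $r$ of the sender's uplink bandwidth and $r$ of the receiver's downlink bandwidth; these are shared among all transmissions involving the site. Site $v_i$ has a client data stream $s_i$ of rate $R_i$ that must be received by all other sites; the client stream arriving at $v_i$ does not consume $v_i$'s downlink bandwidth. Rates can be split at any granularity: a partitioning scheme splits $s_i$ into $n$ sub-streams $s_{i,1},\ldots,s_{i,n}$ with rates $r_{i,1},\ldots,r_{i,n}$ summing to $R_i$. A sub-stream of $s_i$ is broadcast along a rooted spanning tree rooted at $v_i$: each node forwards the sub-stream to each of its children at the sub-stream's rate, so a node with $c$ children uses $c$ times the rate of its uplink, and each non-root node uses the rate of its downlink. The height of a rooted tree is the maximum number of edges on a path from the root to a leaf. *)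

From mathcomp Require Import all_boot all_order all_algebra.
Set Implicit Arguments. Unset Strict Implicit. Unset Printing Implicit Defensive.
Import Order.TTheory GRing.Theory Num.Theory.

(* A rooted tree on the sites 'I_n is represented by its parent function
   [par : 'I_n -> 'I_n]; the root is its own parent. *)

(* [par] is a rooted spanning tree on 'I_n with root [root]:
   the root is its own parent and every site reaches the root by
   following parents (hence the root is the only fixed point, there are
   no cycles, and the edges {v, par v}, v <> root, form a spanning tree). *)
Definition rooted_spanning_tree (n : nat) (root : 'I_n) (par : 'I_n -> 'I_n) : Prop :=
  par root = root /\ forall v : 'I_n, exists k : nat, iter k par v = root.

Definition nchildren (n : nat) (root : 'I_n) (par : 'I_n -> 'I_n) (u : 'I_n) : nat :=
  #|[set v : 'I_n | (v != root) && (par v == u)]|.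

(* height at most h: every site is at distance at most h from the root
   (iterating the parent of the root stays at the root). *)
Definition height_le (n : nat) (root : 'I_n) (par : 'I_n -> 'I_n) (h : nat) : Prop :=
  forall v : 'I_n, iter h par v = root.

(* Route sub-stream s_{i,j} along the tree in which the source v_i sends to the
   relay v_j, which forwards to every other site (for j = i, a star at v_i).
   Site v_k then uploads its own stream R_k once plus (n-2) copies of every
   sub-stream it relays, i.e. at most R_k + (n-2) sum_i r_{i,k}.  Splitting
   r_{i,j} = R_i b_j with relay weights b_j proportional to the spare uplink
   C_u(v_j) - R_j makes this load at most C_u(v_k) exactly when
   (n-1) sum_i R_i <= sum_i C_u(v_i).  When there is no spare uplink at all,
   that condition forces n <= 2 and any weights do. *)
From mathcomp Require Import all_boot all_order all_algebra.
From mathcomp Require Import reals zify lra.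
Import Order.TTheory GRing.Theory Num.Theory.
Local Open Scope ring_scope.

Section RelayTree.

Context {n : nat}.
Implicit Types i j k v : 'I_n.

Definition relay_tree i j v : 'I_n := if (v == i) || (v == j) then i else j.

Lemma relay_tree_height i j : height_le i (relay_tree i j) 2.
Proof.
move=> v; rewrite /= {2}/relay_tree.
by case: ifP; rewrite /relay_tree ?eqxx // orbT.
Qed.

Lemma relay_tree_spanning i j : rooted_spanning_tree i (relay_tree i j).
Proof.
split; first by rewrite /relay_tree eqxx.
by move=> v; exists 2%N; apply: relay_tree_height.
Qed.

Lemma nchildren_relay_tree_root i j :
  nchildren i (relay_tree i j) i = if j == i then n.-1 else 1%N.
Proof.
rewrite /nchildren /relay_tree; have [-> | ji] := eqVneq j i.
  rewrite -[n in n.-1]card_ord -(cardsC1 i); apply: eq_card => v.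
  by rewrite !inE orbb; case: ifP; rewrite ?eqxx ?andbT.
rewrite -(cards1 j); apply: eq_card => v; rewrite !inE.
have [-> | _] := eqVneq v i; first by rewrite /= eq_sym (negbTE ji).
by have [_ | _] := eqVneq v j; rewrite /= ?eqxx ?(negbTE ji).
Qed.

Lemma nchildren_relay_tree i j k : i != k ->
  nchildren i (relay_tree i j) k = if j == k then (n - 2)%N else 0%N.
Proof.
move=> ik; rewrite /nchildren /relay_tree; have [-> | jk] := eqVneq j k.
  have -> : (n - 2 = #|~: [set i; k]|)%N by rewrite cardsCs setCK cards2 ik card_ord.
  apply: eq_card => v; rewrite !inE negb_or.
  have [-> // | _] := eqVneq v i.
  by have [_ | _] := eqVneq v k; rewrite /= ?eqxx ?(negbTE ik).
apply: eq_card0 => v; rewrite !inE.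
by case: ifP; rewrite ?(negbTE ik) ?(negbTE jk) andbF.
Qed.

Lemma nchildren_relay_tree_root_le i j :
  (nchildren i (relay_tree i j) i <= 1 + (n - 2) * (j == i))%N.
Proof. by rewrite nchildren_relay_tree_root; case: eqP => _; lia. Qed.

Lemma relay_uplink_le {R : numDomainType} {r : 'I_n -> 'I_n -> R}
    (r_ge0 : forall i j, 0 <= r i j) k :
  \sum_(i < n) \sum_(j < n) r i j * (nchildren i (relay_tree i j) k)%:R
    <= \sum_(j < n) r k j + (n - 2)%:R * \sum_(i < n) r i k.
Proof.
have own : \sum_(j < n) r k j * (nchildren k (relay_tree k j) k)%:R
    <= \sum_(j < n) r k j + (n - 2)%:R * r k k.
  rewrite (bigD1 k) //= [X in _ <= X + _](bigD1 k) //= [leRHS]addrAC lerD //.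
    rewrite [_ * r k k]mulrC -[X in _ <= X + _]mulr1 -mulrDr nat1r ler_wpM2l // ler_nat.
    by have := nchildren_relay_tree_root_le k k; rewrite eqxx muln1 add1n.
  apply: ler_sum => j jk; rewrite ler_piMr //.
  by rewrite lern1 (leq_trans (nchildren_relay_tree_root_le k j)) // (negbTE jk) muln0.
have others i : i != k ->
    \sum_(j < n) r i j * (nchildren i (relay_tree i j) k)%:R = (n - 2)%:R * r i k.
  move=> ik; rewrite (bigD1 k) //= nchildren_relay_tree // eqxx mulrC big1 ?addr0 //.
  by move=> j jk; rewrite nchildren_relay_tree // (negbTE jk) mulr0.
rewrite (bigD1 k) //= (eq_bigr _ others) -mulr_sumr.
rewrite [X in _ <= _ + _ * X](bigD1 k) //= mulrDr addrA lerD2r.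
exact: own.
Qed.

End RelayTree.

Lemma relay_weights {R : realFieldType} {n : nat} (hn : (0 < n)%N)
    {Cu Rt : 'I_n -> R} (Rt_gt0 : forall i, 0 < Rt i)
    (Rt_le_Cu : forall i, Rt i <= Cu i)
    (total_uplink : (n.-1)%:R * \sum_(i < n) Rt i <= \sum_(i < n) Cu i) :
  exists b : 'I_n -> R, [/\ forall j, 0 <= b j, \sum_(j < n) b j = 1 &
    forall k, (n - 2)%:R * (\sum_(i < n) Rt i) * b k <= Cu k - Rt k].
Proof.
set S := \sum_(i < n) Rt i in total_uplink *.
set C := \sum_(i < n) Cu i in total_uplink *.
have S_gt0 : 0 < S.
  by rewrite /S (bigD1 (Ordinal hn)) //= ltr_wpDr ?Rt_gt0 // sumr_ge0 // => i _; exact/ltW.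
have [SC | CS] := ltP S C.
  have spare_gt0 : 0 < C - S by rewrite subr_gt0.
  have relay_load : (n - 2)%:R * S <= C - S.
    have [n_le1 | n_gt1] := leqP n 1.
      by rewrite (_ : n - 2 = 0)%N ?mul0r ?subr_ge0 ?ltW //; lia.
    move: total_uplink; rewrite (_ : n.-1 = (n - 2).+1)%N; last by lia.
    by rewrite -natr1 mulrDl mul1r; lra.
  exists (fun j => (Cu j - Rt j) / (C - S)); split.
  - by move=> j; rewrite divr_ge0 ?subr_ge0 ?Rt_le_Cu ?ltW.
  - by rewrite -mulr_suml sumrB divff ?lt0r_neq0.
  - move=> k; rewrite -[leRHS](divfK (lt0r_neq0 spare_gt0)) mulrC.
    by rewrite ler_wpM2l // divr_ge0 ?subr_ge0 ?Rt_le_Cu ?ltW.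
have n_le2 : (n <= 2)%N.
  have : (n.-1)%:R * S <= 1 * S by rewrite mul1r (le_trans total_uplink).
  by rewrite ler_pM2r // lern1; lia.
exists (fun=> n%:R^-1); split.
- by move=> j; rewrite invr_ge0.
- by rewrite sumr_const card_ord -[_ *+ n]mulr_natr mulVf // pnatr_eq0 -lt0n.
- by move=> k; rewrite (_ : n - 2 = 0)%N ?mul0r ?subr_ge0 //; lia.
Qed.

Theorem theorem3p1 (R : realType) (n : nat) (hn : (0 < n)%N)
  (Cu Cd Rt : 'I_n -> R)
  (hCu : forall k, 0 < Cu k) (hCd : forall k, 0 < Cd k) (hR : forall i, 0 < Rt i)
  (h1 : forall i, Rt i <= Cu i)
  (h2 : forall i, \sum_(j < n | j != i) Rt j <= Cd i)
  (h3 : (n.-1)%:R * \sum_(i < n) Rt i <= \sum_(i < n) Cu i) :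
  exists (r : 'I_n -> 'I_n -> R) (T : 'I_n -> 'I_n -> 'I_n -> 'I_n),
    (forall i j, 0 <= r i j) /\
    (forall i, \sum_(j < n) r i j = Rt i) /\
    (forall i j, rooted_spanning_tree i (T i j)) /\
    (forall k,
        \sum_(i < n) \sum_(j < n) r i j * (nchildren i (T i j) k)%:R <= Cu k /\
        \sum_(i < n | i != k) \sum_(j < n) r i j <= Cd k) /\
    (forall i j, height_le i (T i j) 2).
Proof.
have [b [b_ge0 b_sum1 b_fits]] := relay_weights hn hR h1 h3.
pose r i j := Rt i * b j.
have r_ge0 i j : 0 <= r i j := mulr_ge0 (ltW (hR i)) (b_ge0 j).
have r_row i : \sum_(j < n) r i j = Rt i by rewrite -mulr_sumr b_sum1 mulr1.
exists r, relay_tree; split=> //; split=> //; split.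
  exact: relay_tree_spanning.
split; last exact: relay_tree_height.
move=> k; split; last by rewrite (eq_bigr _ (fun i _ => r_row i)).
apply: le_trans (relay_uplink_le r_ge0 k) _.
by rewrite r_row /r -mulr_suml mulrA addrC -lerBrDr.
Qed.
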